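(* Let $Q$ be a quantale and $M$ a $Q$-module. (a) $Q$ is precoherent if and only if $Q$ is both algebraic and blooming. (b) If $Q$ is precoherent, then $M$ is precoherent if and only if $M$ is both algebraic and blooming.
   Context: A quantale is a poset $Q$ in which every nonempty subset has a join $\sum$ (no bottom required), with top $1$ and a commutative associative multiplication with unit $1$ distributing over nonempty joins. A $Q$-module is a poset $M$ with all nonempty joins and an associative unital action distributing over nonempty joins in each variable. In a complete semilattice $L$ (all nonempty joins), $c$ is compact if $c\le\sum_{i\in I}x_i$ implies $c\le\sum_{i\in I_0}x_i$ for some finite $I_0\subseteq I$; $K(L)$ is the set of compact elements; $L$ is algebraic if $x=\sum\{c\in K(L):c\le x\}$ for all $x$. $Q$ is precoherent if it is algebraic and $K(Q)$ is closed under multiplication. For precoherent $Q$, $M$ is precoherent if $M$ is algebraic and $cm\in K(M)$ for all $c\in K(Q)$, $m\in K(M)$. Suspension: order nonempty subsets of $L$ by $S\le T$ iff each $s\in S$ is below the join of finitely many elements of $T$; $\Sigma L$ is the poset of equivalence classes; $\sigma_L:\Sigma L\to L$, $S\mapsto\sum S$. $\Sigma Q$ has multiplication $S\cdot T=\{st:s\in S,t\in T\}$ and $\Sigma Q$ acts on $\Sigma M$ by $S\cdot A=\{sa\}$. A left adjoint of $\sigma_L$ is an order-preserving $\sigma_L^\flat:L\to\Sigma L$ with $\sigma_L^\flat(x)\le S\iff x\le\sigma_L(S)$. $Q$ is blooming if $\sigma_Q$ has a left adjoint and $\sigma_Q^\flat(ab)=\sigma_Q^\flat(a)\cdot\sigma_Q^\flat(b)$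 for all $a,b\in Q$. For blooming $Q$, $M$ is blooming if $\sigma_M$ has a left adjoint and $\sigma_M^\flat(qm)=\sigma_Q^\flat(q)\cdot\sigma_M^\flat(m)$ for all $q\in Q$, $m\in M$. *)

From Stdlib Require Import List.
Import ListNotations.
Set Implicit Arguments.

(** A complete semilattice: a poset in which every NONEMPTY subset has a
    join.  [sup S] is the join of S when S is nonempty (its value on the
    empty set is unconstrained and never used). *)
Record CSL := {
  car :> Type;
  le : car -> car -> Prop;
  le_refl : forall x, le x x;
  le_trans : forall x y z, le x y -> le y z -> le x z;
  le_antisym : forall x y, le x y -> le y x -> x = y;
  sup : (car -> Prop) -> car;
  sup_ub : forall (S : car -> Prop) x, S x -> le x (sup S);
  sup_least : forall (S : car -> Prop) y,
      (exists x, S x) -> (forall x, S x -> le x y) -> le (sup S) y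
}.

Arguments le {c} _ _.
Arguments sup {c} _.

Definition nonempty {T : Type} (S : T -> Prop) : Prop := exists x, S x.

Definition img {A B : Type} (f : A -> B) (S : A -> Prop) : B -> Prop :=
  fun y => exists x, S x /\ y = f x.

(** Quantale: commutative, unit = top, multiplication distributes over
    nonempty joins (one side suffices by commutativity). *)
Record Quantale := {
  qL :> CSL;
  mul : qL -> qL -> qL;
  one : qL;
  mul_assoc : forall a b c, mul a (mul b c) = mul (mul a b) c;
  mul_comm : forall a b, mul a b = mul b a;
  mul_one : forall a, mul one a = a;
  one_top : forall a, le a one;
  mul_sup : forall a (S : qL -> Prop), nonempty S ->
      mul a (sup S) = sup (img (mul a) S)
}.

Record QModule (Q : Quantale) := {
  mL :> CSL;
  act : Q -> mL -> mL;
  act_assoc : forall (p q : Q) m, act (@mul Q p q) m = act p (act q m);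
  act_one : forall m, act (@one Q) m = m;
  act_supr : forall (q : Q) (A : mL -> Prop), nonempty A ->
      act q (sup A) = sup (img (act q) A);
  act_supl : forall (S : Q -> Prop) (m : mL), nonempty S ->
      act (sup S) m = sup (img (fun s => act s m) S)
}.

Arguments act {Q} _ _ _.

Section Generic.
Variable L : CSL.

Definition finsub (l : list L) (S : L -> Prop) : Prop :=
  l <> [] /\ forall x, In x l -> S x.

Definition of_list (l : list L) : L -> Prop := fun x => In x l.

Definition compact (c : L) : Prop :=
  forall S : L -> Prop, nonempty S -> le c (sup S) ->
    exists l, finsub l S /\ le c (sup (of_list l)).

Definition algebraic : Prop :=
  forall x : L, (exists c, compact c /\ le c x) /\
                x = sup (fun c => compact c /\ le c x).

(** Suspension preorder on nonempty subsets of L; Sigma L is its quotient,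
    which we represent by representatives. *)
Definition susp_le (S T : L -> Prop) : Prop :=
  forall s, S s -> exists l, finsub l T /\ le s (sup (of_list l)).

Definition susp_eq (S T : L -> Prop) : Prop := susp_le S T /\ susp_le T S.

(** f : L -> Sigma L is a left adjoint of sigma_L : S |-> sup S *)
Definition left_adjoint_sigma (f : L -> (L -> Prop)) : Prop :=
  (forall x, nonempty (f x)) /\
  (forall x y, le x y -> susp_le (f x) (f y)) /\
  (forall x (S : L -> Prop), nonempty S -> (susp_le (f x) S <-> le x (sup S))).

End Generic.

Arguments compact {L} _.
Arguments left_adjoint_sigma {L} _.
Arguments susp_le {L} _ _.
Arguments susp_eq {L} _ _.
Arguments algebraic L : clear implicits.

Definition setmul (Q : Quantale) (S T : Q -> Prop) : Q -> Prop :=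
  fun u => exists s t, S s /\ T t /\ u = @mul Q s t.

Definition setact (Q : Quantale) (M : QModule Q) (S : Q -> Prop) (A : M -> Prop)
  : M -> Prop :=
  fun u => exists s a, S s /\ A a /\ u = act M s a.

Definition precoherent_Q (Q : Quantale) : Prop :=
  algebraic Q /\
  (forall a b : Q, compact a -> compact b -> compact (@mul Q a b)).

Definition precoherent_M (Q : Quantale) (M : QModule Q) : Prop :=
  algebraic M /\
  (forall (c : Q) (m : M), compact c -> compact m -> compact (act M c m)).

Definition blooming_Q (Q : Quantale) : Prop :=
  exists f : Q -> (Q -> Prop), left_adjoint_sigma f /\
    forall a b : Q, susp_eq (f (@mul Q a b)) (setmul Q (f a) (f b)).

Definition blooming_M (Q : Quantale) (M : QModule Q) : Prop :=
  exists fQ : Q -> (Q -> Prop), left_adjoint_sigma fQ /\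
  exists g : M -> (M -> Prop), left_adjoint_sigma g /\
    forall (q : Q) (m : M), susp_eq (g (act M q m)) (setact M (fQ q) (g m)).

From Stdlib Require Import List.
Import ListNotations.

(* A left adjoint [f] of [sigma] characterises compactness: [c] is compact iff
   [c] lies below a finite join of elements of [f c]; for algebraic [L] the
   left adjoint is [x |-> {compact c <= x}].  A map distributing over nonempty
   joins in each variable carries "finitely below" to "finitely below" in each
   coordinate, so the blooming inclusion [sigma^b (ab) >= sigma^b a * sigma^b b]
   makes [ab] compact when [a] and [b] are.  Conversely, if compact elements
   are closed under the map, every compact element below
   [ab = \/K(a) * \/K(b)] is finitely below [K(a) * K(b)], which is the
   blooming identity.  Parts (a) and (b) are the instances [mul] and [act]. *)

Section Joins.
Variable L : CSL.

Lemma sup_mono (A B : L -> Prop) :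
  nonempty A -> (forall x, A x -> B x) -> le (sup A) (sup B).
Proof.
  intros HA HAB. apply sup_least; [exact HA|].
  intros x Hx. apply sup_ub. auto.
Qed.

Lemma sup_ext (A B : L -> Prop) :
  nonempty A -> (forall x, A x <-> B x) -> sup A = sup B.
Proof.
  intros [a Ha] HAB. apply le_antisym; apply sup_mono.
  - exists a; exact Ha.
  - intros x; apply HAB.
  - exists a; apply HAB, Ha.
  - intros x; apply HAB.
Qed.

Lemma nonempty_of_list (l : list L) : l <> [] -> nonempty (of_list L l).
Proof.
  destruct l as [|a l]; [congruence|]. intros _. exists a; left; reflexivity.
Qed.

Lemma sup_of_list_incl (l l' : list L) :
  l <> [] -> incl l l' -> le (sup (of_list L l)) (sup (of_list L l')).
Proof. intros Hl Hincl. apply sup_mono; [apply nonempty_of_list, Hl | exact Hincl]. Qed.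

Lemma sup_of_list1 (x : L) : sup (of_list L [x]) = x.
Proof.
  apply le_antisym.
  - apply sup_least; [apply nonempty_of_list; discriminate|].
    intros y [<-|[]]. apply le_refl.
  - apply sup_ub. left; reflexivity.
Qed.

Lemma sup_pair_le (x y : L) : le x y -> sup (fun z => z = x \/ z = y) = y.
Proof.
  intros Hxy. apply le_antisym.
  - apply sup_least; [exists x; left; reflexivity|].
    intros z [-> | ->]; [exact Hxy | apply le_refl].
  - apply sup_ub. right; reflexivity.
Qed.

Lemma finsub_sup_le (l : list L) (S : L -> Prop) :
  finsub L l S -> le (sup (of_list L l)) (sup S).
Proof. intros [Hl HlS]. apply sup_mono; [apply nonempty_of_list, Hl | exact HlS]. Qed.

Definition finitely_below (x : L) (S : L -> Prop) : Prop :=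
  exists l, finsub L l S /\ le x (sup (of_list L l)).

Lemma finitely_below_of_mem (x : L) (S : L -> Prop) : S x -> finitely_below x S.
Proof.
  intros Hx. exists [x]. split.
  - split; [discriminate|]. intros y [<-|[]]; exact Hx.
  - rewrite sup_of_list1. apply le_refl.
Qed.

Lemma finitely_below_le_sup (x : L) (S : L -> Prop) :
  finitely_below x S -> le x (sup S).
Proof.
  intros [l [Hl Hx]]. eapply le_trans; [exact Hx|]. apply finsub_sup_le, Hl.
Qed.

Lemma finsub_common_bound (U : L -> Prop) (l : list L) :
  l <> [] -> (forall x, In x l -> finitely_below x U) ->
  exists l', finsub L l' U /\ forall x, In x l -> le x (sup (of_list L l')).
Proof.
  induction l as [|a l IH]; intros Hne Hl; [congruence|].
  destruct (Hl a (or_introl eq_refl)) as [la [[Hla HlaU] Ha]].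
  destruct l as [|b l].
  { exists la. split; [split; assumption|]. intros x [<-|[]]; exact Ha. }
  destruct IH as [lr [[Hlr HlrU] Hr]];
    [discriminate | intros x Hx; apply Hl; right; exact Hx |].
  exists (la ++ lr). split; [split|].
  - destruct la; [congruence | discriminate].
  - intros x Hx. apply in_app_or in Hx as [Hx|Hx]; auto.
  - intros x [<-|Hx].
    + eapply le_trans; [exact Ha|].
      apply sup_of_list_incl; [exact Hla | apply incl_appl, incl_refl].
    + eapply le_trans; [apply Hr, Hx|].
      apply sup_of_list_incl; [exact Hlr | apply incl_appr, incl_refl].
Qed.

Lemma finitely_below_trans (x : L) (T U : L -> Prop) :
  finitely_below x T -> susp_le T U -> finitely_below x U.
Proof.
  intros [l [[Hl HlT] Hx]] HTU.
  destruct (finsub_common_bound U l Hl) as [l' [Hl' Hbound]].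
  { intros y Hy. apply HTU, HlT, Hy. }
  exists l'. split; [exact Hl'|].
  eapply le_trans; [exact Hx|].
  apply sup_least; [apply nonempty_of_list, Hl | exact Hbound].
Qed.

Lemma susp_le_refl (S : L -> Prop) : susp_le S S.
Proof. intros s Hs. apply finitely_below_of_mem, Hs. Qed.

Lemma compact_iff_finitely_below_adjoint (f : L -> (L -> Prop)) (c : L) :
  left_adjoint_sigma f -> (compact c <-> finitely_below c (f c)).
Proof.
  intros [Hne [_ Hadj]]. split.
  - intros Hc. apply Hc; [apply Hne|]. apply (Hadj c (f c) (Hne c)), susp_le_refl.
  - intros Hcf S HS HcS. apply (finitely_below_trans _ _ _ Hcf). apply Hadj; assumption.
Qed.

Definition compacts_below (x : L) : L -> Prop := fun c => compact c /\ le c x.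

Lemma algebraic_left_adjoint : algebraic L -> left_adjoint_sigma compacts_below.
Proof.
  intros Halg. split; [|split].
  - intros x. apply Halg.
  - intros x y Hxy c [Hc Hcx].
    apply finitely_below_of_mem. split; [exact Hc | eapply le_trans; eassumption].
  - intros x S HS. split.
    + intros HxS. destruct (Halg x) as [Hx ->].
      apply sup_least; [exact Hx|]. intros c Hc. apply finitely_below_le_sup, HxS, Hc.
    + intros HxS c [Hc Hcx]. apply Hc; [exact HS | eapply le_trans; eassumption].
Qed.

End Joins.

Arguments finitely_below {L} _ _.
Arguments compacts_below {L} _ _.
Arguments sup_pair_le {L x y} _.
Arguments finitely_below_trans {L x T U} _ _.
Arguments compact_iff_finitely_below_adjoint {L f c} _.

Definition img2 {A B C : Type} (h : A -> B -> C) (S : A -> Prop) (T : B -> Prop)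
  : C -> Prop :=
  fun u => exists s t, S s /\ T t /\ u = h s t.

Section Bilinear.
Variables (A B C : CSL) (h : A -> B -> C).
Hypothesis h_supl : forall (S : A -> Prop) b,
  nonempty S -> h (sup S) b = sup (img (fun s => h s b) S).
Hypothesis h_supr : forall a (T : B -> Prop),
  nonempty T -> h a (sup T) = sup (img (h a) T).

Lemma img2_sup (S : A -> Prop) (T : B -> Prop) :
  nonempty S -> nonempty T -> h (sup S) (sup T) = sup (img2 h S T).
Proof.
  intros [s Hs] [t Ht]. rewrite h_supl by (exists s; exact Hs).
  apply le_antisym.
  - apply sup_least; [exists (h s (sup T)), s; auto|].
    intros y [s' [Hs' ->]]. rewrite h_supr by (exists t; exact Ht).
    apply sup_least; [exists (h s' t), t; auto|].
    intros z [t' [Ht' ->]]. apply sup_ub. exists s', t'; auto.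
  - apply sup_least; [exists (h s t), s, t; auto|].
    intros z [s' [t' [Hs' [Ht' ->]]]].
    eapply le_trans; [|apply sup_ub; exists s'; split; [exact Hs' | reflexivity]].
    rewrite h_supr by (exists t; exact Ht). apply sup_ub. exists t'; auto.
Qed.

Lemma bilin_mono (x x' : A) (y y' : B) :
  le x x' -> le y y' -> le (h x y) (h x' y').
Proof.
  intros Hx Hy. apply le_trans with (h x' y).
  - rewrite <- (sup_pair_le Hx), h_supl by (exists x; left; reflexivity).
    apply sup_ub. exists x; split; [left|]; reflexivity.
  - rewrite <- (sup_pair_le Hy), h_supr by (exists y; left; reflexivity).
    apply sup_ub. exists y; split; [left|]; reflexivity.
Qed.

Lemma finitely_below_img2 (x : A) (y : B) (S : A -> Prop) (T : B -> Prop) :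
  finitely_below x S -> finitely_below y T -> finitely_below (h x y) (img2 h S T).
Proof.
  intros [la [[Hla HlaS] Hx]] [lb [[Hlb HlbT] Hy]].
  set (lp := flat_map (fun s => map (h s) lb) la).
  assert (Hlp : forall z, In z lp <-> img2 h (of_list A la) (of_list B lb) z).
  { intros z. unfold lp. rewrite in_flat_map. split.
    - intros [s [Hs Hz]]. apply in_map_iff in Hz as [t [<- Ht]].
      exists s, t; auto.
    - intros [s [t [Hs [Ht ->]]]]. exists s; split; [exact Hs|].
      apply in_map_iff; exists t; auto. }
  destruct la as [|a la]; [congruence|]. destruct lb as [|b lb]; [congruence|].
  assert (Hab : In (h a b) lp) by (apply Hlp; exists a, b; simpl; auto).
  exists lp. split; [split|].
  - intros E. rewrite E in Hab. destruct Hab.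
  - intros z Hz. apply Hlp in Hz as [s [t [Hs [Ht ->]]]].
    exists s, t; auto.
  - eapply le_trans; [apply bilin_mono; eassumption|].
    rewrite img2_sup by (apply nonempty_of_list; discriminate).
    apply sup_mono; [exists (h a b), a, b; simpl; auto|].
    intros z Hz. apply Hlp, Hz.
Qed.

Lemma compact_bilin (fA : A -> (A -> Prop)) (fB : B -> (B -> Prop))
    (g : C -> (C -> Prop)) (a : A) (b : B) :
  left_adjoint_sigma fA -> left_adjoint_sigma fB -> left_adjoint_sigma g ->
  susp_le (img2 h (fA a) (fB b)) (g (h a b)) ->
  compact a -> compact b -> compact (h a b).
Proof.
  intros HfA HfB Hg Hbloom Ha Hb.
  apply (compact_iff_finitely_below_adjoint Hg).
  apply (finitely_below_trans (T := img2 h (fA a) (fB b)));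
    [|exact Hbloom].
  apply finitely_below_img2.
  - exact (proj1 (compact_iff_finitely_below_adjoint HfA) Ha).
  - exact (proj1 (compact_iff_finitely_below_adjoint HfB) Hb).
Qed.

Lemma compacts_below_bilin (a : A) (b : B) :
  algebraic A -> algebraic B ->
  (forall x y, compact x -> compact y -> compact (h x y)) ->
  susp_eq (compacts_below (h a b)) (img2 h (compacts_below a) (compacts_below b)).
Proof.
  intros HA HB Hclosed. split.
  - intros e [He Heab].
    destruct (HA a) as [[c Hc] Ha]. destruct (HB b) as [[d Hd] Hb].
    apply He; [exists (h c d), c, d; auto|].
    rewrite <- img2_sup by (eexists; eassumption).
    unfold compacts_below. rewrite <- Ha, <- Hb. exact Heab.
  - intros u [c [d [[Hc Hca] [[Hd Hdb] ->]]]].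
    apply finitely_below_of_mem. split; [apply Hclosed; assumption|].
    apply bilin_mono; assumption.
Qed.

End Bilinear.

Arguments compact_bilin {A B C h} h_supl h_supr {fA fB g a b} _ _ _ _ _ _.

Lemma mul_supl (Q : Quantale) (S : Q -> Prop) (b : Q) :
  nonempty S -> @mul Q (sup S) b = sup (img (fun s => @mul Q s b) S).
Proof.
  intros HS. rewrite mul_comm, mul_sup by exact HS.
  destruct HS as [s Hs]. apply sup_ext.
  - exists (mul Q b s), s; auto.
  - intros z; split; intros [x [Hx ->]]; exists x; split; auto; apply mul_comm.
Qed.

Theorem mainTheorem8 (Q : Quantale) (M : QModule Q) :
  (precoherent_Q Q <-> algebraic Q /\ blooming_Q Q) /\
  (precoherent_Q Q -> (precoherent_M M <-> algebraic M /\ blooming_M M)).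
Proof.
  pose proof (@mul_supl Q) as mul_supl. pose proof (@mul_sup Q) as mul_supr.
  pose proof (@act_supl Q M) as act_supl. pose proof (@act_supr Q M) as act_supr.
  split; [split|intros [HQ _]; split].
  - intros [HQ Hclosed]. split; [exact HQ|].
    exists compacts_below. split; [apply algebraic_left_adjoint, HQ|].
    intros a b. apply compacts_below_bilin; assumption.
  - intros [HQ [f [Hf Hbloom]]]. split; [exact HQ|].
    intros a b. apply (compact_bilin mul_supl mul_supr Hf Hf Hf).
    apply Hbloom.
  - intros [HM Hclosed]. split; [exact HM|].
    exists compacts_below. split; [apply algebraic_left_adjoint, HQ|].
    exists compacts_below. split; [apply algebraic_left_adjoint, HM|].
    intros q m. apply compacts_below_bilin; assumption.
  - intros [HM [fQ [HfQ [g [Hg Hbloom]]]]]. split; [exact HM|].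
    intros c m. apply (compact_bilin act_supl act_supr HfQ Hg Hg).
    apply Hbloom.
Qed.
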